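(* The affine scheme $\mathscr{H}_{\mathbb{A}}^{13}\cap\{p_{121}=p_{112}=p_{211}=0,\ p_{111}=1\}$ coincides with the cluster variety $X_{\mathsf{C}_2}$ under the identification of coordinates $u_1=\theta_{12}$, $u_2=\theta_{23}$, $u_3=\theta_{31}$, $(x_{11},x_{21})=(A_{12},\theta_3)$, $(x_{12},x_{22})=(A_{23},\theta_1)$, $(x_{13},x_{23})=(A_{31},\theta_2)$, $p_{212}=-A_1$, $p_{221}=-A_2$, $p_{122}=-A_3$, $p_{222}=\lambda$ (left-hand sides are coordinates of $\mathscr{H}_{\mathbb{A}}^{13}$, right-hand sides those of $X_{\mathsf{C}_2}$).
   Context: $\mathscr{H}_{\mathbb{A}}^{13}\subset\mathbb{A}^{17}$ (coordinates $u_1,u_2,u_3$, $x_{ij}$ with $i\in\{1,2\},j\in\{1,2,3\}$, $p_{abc}$ with $a,b,c\in\{1,2\}$) is defined by $-u_1\bm{x}_1+D^{(3)}\bm{x}_2=\bm{0}$, $-u_2\bm{x}_2+D^{(1)}\bm{x}_3=\bm{0}$, $-u_3\bm{x}_3-(D^{(2)})^{\dagger}\bm{x}_1=\bm{0}$, $u_2u_3+\det D^{(1)}=0$, $u_3u_1+\det D^{(2)}=0$, $u_1u_2+\det D^{(3)}=0$, where $\bm{x}_j=(x_{1j},x_{2j})^t$, $M^\dagger$ is the adjugate, $D^{(1)}_{ij}=p_{1ij}x_{21}-p_{2ij}x_{11}$, $D^{(2)}_{ij}=p_{i1j}x_{22}-p_{i2j}x_{12}$, $D^{(3)}_{ij}=p_{ij1}x_{23}-p_{ij2}x_{13}$,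 $D^{(k)}$ has rows $(-D^{(k)}_{12},D^{(k)}_{11})$, $(-D^{(k)}_{22},D^{(k)}_{21})$. The cluster variety of type $C_2$, $X_{\mathsf{C}_2}$, is the affine scheme in the $13$-dimensional affine space with coordinates $\theta_{12},\theta_{23},\theta_{31},\theta_1,\theta_2,\theta_3,A_{12},A_{23},A_{31},A_1,A_2,A_3,\lambda$ defined by the nine equations $\theta_i\theta_j=A_{ij}\theta_{ij}+A_{jk}A_kA_{ki}$, $\theta_{ki}\theta_{ij}=A_i\theta_i^2+\lambda A_{jk}\theta_i+A_jA_{jk}^2A_k$, $\theta_i\theta_{jk}=A_{ij}A_j\theta_j+\lambda A_{ki}A_{ij}+A_kA_{ki}\theta_k$ for $(i,j,k)\in\{(1,2,3),(2,3,1),(3,1,2)\}$ (indices of $A_{\bullet\bullet},\theta_{\bullet\bullet}$ read as $12,23,31$). *)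

From HB Require Import structures.
From mathcomp Require Import all_boot all_order all_algebra.
From mathcomp Require Import mpoly.
Set Implicit Arguments. Unset Strict Implicit. Unset Printing Implicit Defensive.
Import Order.TTheory GRing.Theory.
Local Open Scope ring_scope.

Definition in_ideal (T : comRingType) (s : seq T) (f : T) : Prop :=
  exists c : seq T, f = \sum_(i < size s) c`_i * s`_i.

Section Eqs.
Variable R : comRingType.

Local Notation P17 := {mpoly R[17]}.
Definition v17 (k : nat) : P17 := 'X_(inord k).
Definition u1 := v17 0. Definition u2 := v17 1. Definition u3 := v17 2.
Definition x11 := v17 3. Definition x21 := v17 4.
Definition x12 := v17 5. Definition x22 := v17 6.
Definition x13 := v17 7. Definition x23 := v17 8.
Definition p111 := v17 9.  Definition p112 := v17 10.
Definition p121 := v17 11. Definition p122 := v17 12.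
Definition p211 := v17 13. Definition p212 := v17 14.
Definition p221 := v17 15. Definition p222 := v17 16.

Definition pp (a b c : nat) : P17 :=
  match a, b, c with
  | 1, 1, 1 => p111 | 1, 1, _ => p112 | 1, _, 1 => p121 | 1, _, _ => p122
  | _, 1, 1 => p211 | _, 1, _ => p212 | _, _, 1 => p221 | _, _, _ => p222
  end.

Definition D1 (i j : nat) : P17 := pp 1 i j * x21 - pp 2 i j * x11.
Definition D2 (i j : nat) : P17 := pp i 1 j * x22 - pp i 2 j * x12.
Definition D3 (i j : nat) : P17 := pp i j 1 * x23 - pp i j 2 * x13.

(* The 2x2 matrix D^{(k)} with rows (-D_12, D_11), (-D_22, D_21),
   stored as its four entries (m11, m12, m21, m22). *)
Definition mat (D : nat -> nat -> P17) : P17 * P17 * P17 * P17 :=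
  (- D 1 2, D 1 1, - D 2 2, D 2 1).
Definition mdet (m : P17 * P17 * P17 * P17) : P17 :=
  let: (a, b, c, d) := m in a * d - b * c.
Definition mapp (m : P17 * P17 * P17 * P17) (v1 v2 : P17) : P17 * P17 :=
  let: (a, b, c, d) := m in (a * v1 + b * v2, c * v1 + d * v2).
Definition madj (m : P17 * P17 * P17 * P17) : P17 * P17 * P17 * P17 :=
  let: (a, b, c, d) := m in (d, - b, - c, a).

Definition H_eqs : seq P17 :=
  let e1 := mapp (mat D3) x12 x22 in
  let e2 := mapp (mat D1) x13 x23 in
  let e3 := mapp (madj (mat D2)) x11 x21 in
  [:: - u1 * x11 + e1.1; - u1 * x21 + e1.2;
      - u2 * x12 + e2.1; - u2 * x22 + e2.2;
      - u3 * x13 - e3.1; - u3 * x23 - e3.2;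
      u2 * u3 + mdet (mat D1);
      u3 * u1 + mdet (mat D2);
      u1 * u2 + mdet (mat D3)].

Definition slice_eqs : seq P17 := [:: p121; p112; p211; p111 - 1].

Local Notation P13 := {mpoly R[13]}.
Definition v13 (k : nat) : P13 := 'X_(inord k).
Definition th12 := v13 0. Definition th23 := v13 1. Definition th31 := v13 2.
Definition th1 := v13 3.  Definition th2 := v13 4.  Definition th3 := v13 5.
Definition A12 := v13 6.  Definition A23 := v13 7.  Definition A31 := v13 8.
Definition A1 := v13 9.   Definition A2 := v13 10.  Definition A3 := v13 11.
Definition lam := v13 12.

Definition C2_triple (ti tj tk tij tjk tki ai aj ak aij ajk aki : P13)
  : seq P13 :=
  [:: ti * tj - (aij * tij + ajk * ak * aki);
      tki * tij - (ai * ti ^+ 2 + lam * ajk * ti + aj * ajk ^+ 2 * ak);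
      ti * tjk - (aij * aj * tj + lam * aki * aij + ak * aki * tk)].

Definition XC2_eqs : seq P13 :=
  C2_triple th1 th2 th3 th12 th23 th31 A1 A2 A3 A12 A23 A31 ++
  C2_triple th2 th3 th1 th23 th31 th12 A2 A3 A1 A23 A31 A12 ++
  C2_triple th3 th1 th2 th31 th12 th23 A3 A1 A2 A31 A12 A23.

(* ---------- The identification, as the ring map k[A^17] -> k[A^13] ----
   corresponding to the closed embedding A^13 -> A^17 onto the slice. *)
Definition ident_img (i : 'I_17) : P13 :=
  match val i with
  | 0 => th12 | 1 => th23 | 2 => th31
  | 3 => A12 (* x11 *) | 4 => th3 (* x21 *)
  | 5 => A23 (* x12 *) | 6 => th1 (* x22 *)
  | 7 => A31 (* x13 *) | 8 => th2 (* x23 *)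
  | 9 => 1 (* p111 *) | 10 => 0 (* p112 *) | 11 => 0 (* p121 *)
  | 12 => - A3 (* p122 *) | 13 => 0 (* p211 *) | 14 => - A1 (* p212 *)
  | 15 => - A2 (* p221 *) | _ => lam (* p222 *)
  end.

Definition ident (f : P17) : P13 := f \mPo [tuple ident_img i | i < 17].

End Eqs.

(* It is onto,
   and its kernel is generated by the four slice equations, because sending
   theta_ij, theta_i, A_ij, A_i, lambda back to the coordinates they are identified
   with gives a section of [ident] modulo the slice. The preimage of an
   ideal of k[A^13] is therefore the slice ideal plus lifts of its generators, and
   [ident] maps the nine equations of H^13_A to the nine relations of X_C2 up to
   order and sign. *)

From HB Require Import structures.
From mathcomp Require Import all_boot all_order all_algebra.
From mathcomp Require Import mpoly ring.
Set Implicit Arguments. Unset Strict Implicit. Unset Printing Implicit Defensive.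
Import GRing.Theory.
Local Open Scope ring_scope.

Section Ideals.
Variable T : comNzRingType.
Implicit Types (s t : seq T) (a f g x : T).

Lemma in_ideal0 s : in_ideal s 0.
Proof. by exists [::]; rewrite big1 // => i _; rewrite nth_nil mul0r. Qed.

Lemma in_idealD s f g : in_ideal s f -> in_ideal s g -> in_ideal s (f + g).
Proof.
move=> [c ->] [d ->]; exists (mkseq (fun i => c`_i + d`_i) (size s)).
by rewrite -big_split; apply: eq_bigr => i _; rewrite nth_mkseq // mulrDl.
Qed.

Lemma in_idealM s a f : in_ideal s f -> in_ideal s (a * f).
Proof.
move=> [c ->]; exists (mkseq (fun i => a * c`_i) (size s)).
by rewrite mulr_sumr; apply: eq_bigr => i _; rewrite nth_mkseq // mulrA.
Qed.

Lemma in_idealN s f : in_ideal s f -> in_ideal s (- f).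
Proof. by rewrite -mulN1r; apply: in_idealM. Qed.

Lemma in_ideal_nth s j : (j < size s)%N -> in_ideal s s`_j.
Proof.
move=> lt_j_s; exists (mkseq (fun i => (i == j)%:R) (size s)).
rewrite (bigD1 (Ordinal lt_j_s)) //= nth_mkseq // eqxx mul1r big1 ?addr0 //.
move=> i neq_ij; rewrite nth_mkseq // -[j]/(val (Ordinal lt_j_s)).
by rewrite (inj_eq val_inj) (negPf neq_ij) mul0r.
Qed.

Lemma in_ideal_mem s x : x \in s -> in_ideal s x.
Proof. by move=> s_x; rewrite -(nth_index 0 s_x); apply: in_ideal_nth; rewrite index_mem. Qed.

Lemma in_ideal_ind s (P : T -> Prop) :
  P 0 -> (forall f g, P f -> P g -> P (f + g)) -> (forall a f, P f -> P (a * f)) ->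
  {in s, forall x, P x} -> forall f, in_ideal s f -> P f.
Proof.
move=> P0 PD PM Ps f [c ->]; apply: big_ind => // i _.
by apply: PM; apply: Ps; apply: mem_nth.
Qed.

Definition sub_ideal s t := forall f, in_ideal s f -> in_ideal t f.

Lemma sub_idealP s t : {in s, forall x, in_ideal t x} -> sub_ideal s t.
Proof. exact: in_ideal_ind (@in_ideal0 t) (@in_idealD t) (@in_idealM t). Qed.

Lemma sub_ideal_catr s t : sub_ideal t (s ++ t).
Proof. by apply: sub_idealP => x t_x; apply: in_ideal_mem; rewrite mem_cat t_x orbT. Qed.

End Ideals.

Lemma in_ideal_rmorph (T U : comNzRingType) (phi : {rmorphism T -> U}) (s : seq T) f :
  in_ideal s f -> in_ideal (map phi s) (phi f).
Proof.
move: f; apply: in_ideal_ind => [|f g|a f|x s_x]; rewrite ?rmorph0 ?rmorphD ?rmorphM.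
- exact: in_ideal0.
- exact: in_idealD.
- exact: in_idealM.
- by apply: in_ideal_mem; apply: map_f.
Qed.

Lemma in_ideal_preimage (T U : comNzRingType)
    (phi : {rmorphism T -> U}) (psi : {rmorphism U -> T}) (s k : seq T) :
  {in k, forall x, phi x = 0} -> (forall g, in_ideal k (g - psi (phi g))) ->
  forall f, in_ideal (s ++ k) f <-> in_ideal (map phi s) (phi f).
Proof.
move=> ker_k sect_k f; split=> [/(in_ideal_rmorph phi) | /(in_ideal_rmorph psi)].
  apply: sub_idealP => _ /mapP[x + ->]; rewrite mem_cat => /orP[s_x | k_x].
    by apply: in_ideal_mem; apply: map_f.
  by rewrite ker_k //; apply: in_ideal0.
move=> psi_phi_f; rewrite -(subrK (psi (phi f)) f).
apply: in_idealD; first exact: sub_ideal_catr.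
apply: sub_idealP psi_phi_f => _ /mapP[_ /mapP[x s_x ->] ->].
rewrite -[psi _](subrKC x) -opprB; apply: in_idealD.
  by apply: in_ideal_mem; rewrite mem_cat s_x.
by apply: in_idealN; apply: sub_ideal_catr.
Qed.

Lemma in_ideal_subr_lrmorph (n : nat) (R : comNzRingType)
    (sigma : {lrmorphism {mpoly R[n]} -> {mpoly R[n]}}) (s : seq {mpoly R[n]}) :
  (forall i, in_ideal s ('X_i - sigma 'X_i)) -> forall p, in_ideal s (p - sigma p).
Proof.
pose P p := in_ideal s (p - sigma p).
have P1 : P 1 by rewrite /P rmorph1 subrr; apply: in_ideal0.
have PM p q : P p -> P q -> P (p * q).
  rewrite /P rmorphM => Pp Pq.
  have -> : p * q - sigma p * sigma q = p * (q - sigma q) + sigma q * (p - sigma p) by ring.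
  by apply: in_idealD; apply: in_idealM.
move=> PX p; elim/mpolyind: p => [|c m p _ _ Pp].
  by rewrite /P raddf0 subr0; apply: in_ideal0.
rewrite raddfD /= linearZ /= opprD addrACA -scalerBr -mul_mpolyC.
apply: in_idealD => //; apply: in_idealM.
rewrite -/(P _) mpolyXE_id; apply: (big_ind P) => // i _.
elim: (m i) => [|e Pe]; first by rewrite expr0.
by rewrite exprS; apply: PM => //; apply: PX.
Qed.

Section Identification.
Variable R : comNzRingType.
Local Notation C := (XC2_eqs R).

Definition ident_tuple := [tuple ident_img R i | i < 17].
HB.instance Definition _ := GRing.LRMorphism.copy (@ident R) (comp_mpoly ident_tuple).

Definition retract_img (i : 'I_13) : {mpoly R[17]} :=
  match val i with
  | 0 => u1 R | 1 => u2 R | 2 => u3 R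
  | 3 => x22 R | 4 => x23 R | 5 => x21 R
  | 6 => x11 R | 7 => x12 R | 8 => x13 R
  | 9 => - p212 R | 10 => - p221 R | 11 => - p122 R
  | _ => p222 R
  end.

Definition retract_tuple := [tuple retract_img i | i < 13].

Lemma ident_v17 k : (k < 17)%N -> ident (v17 R k) = ident_img R (inord k).
Proof. by move=> lt_k; rewrite /ident comp_mpolyXU -tnth_nth tnth_mktuple. Qed.

Lemma retract_v13 k : (k < 13)%N -> v13 R k \mPo retract_tuple = retract_img (inord k).
Proof. by move=> lt_k; rewrite comp_mpolyXU -tnth_nth tnth_mktuple. Qed.

Lemma ident_slice_eqs : {in slice_eqs R, forall x, ident x = 0}.
Proof.
move=> x; rewrite !inE => /or4P[] /eqP ->; rewrite /p121 /p112 /p211 /p111.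
all: by rewrite ?rmorphB ?rmorph1 /= ident_v17 // /ident_img /= inordK // ?subrr.
Qed.

Lemma slice_congr_retract_ident (f : {mpoly R[17]}) :
  in_ideal (slice_eqs R) (f - comp_mpoly retract_tuple (ident f)).
Proof.
pose sigma : {lrmorphism {mpoly R[17]} -> {mpoly R[17]}} :=
  comp_mpoly retract_tuple \o @ident R.
apply: (@in_ideal_subr_lrmorph _ _ sigma (slice_eqs R)) => i /=.
rewrite -[i]inord_val; move: (val i) (ltn_ord i) => k lt_k.
rewrite -/(v17 R k) ident_v17 // /ident_img /= inordK //.
rewrite /th12 /th23 /th31 /th1 /th2 /th3 /A12 /A23 /A31 /A1 /A2 /A3 /lam.
do 17 try case: k lt_k => [|k] lt_k; try by [].
all: rewrite ?rmorph0 ?rmorph1 ?rmorphN /= ?retract_v13 // /retract_img /= ?inordK //=.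
all: rewrite ?opprK ?subr0.
(* Thirteen coordinates are fixed; the remaining four are the slice generators. *)
all: try by rewrite (_ : _ - _ = 0); [exact: in_ideal0 | exact: subrr].
all: by apply: in_ideal_mem; rewrite /p121 /p112 /p211 /p111 !inE eqxx ?orbT.
Qed.

Lemma ident_H_eqs : map (@ident R) (H_eqs R) =
  [:: C`_0; - C`_8; C`_3; - C`_2; C`_6; - C`_5; C`_7; C`_1; C`_4].
Proof.
rewrite /H_eqs /mat /D1 /D2 /D3 /mapp /madj /mdet /=.
rewrite !(rmorphD, rmorphB, rmorphN, rmorphM) /=.
rewrite /u1 /u2 /u3 /x11 /x21 /x12 /x22 /x13 /x23.
rewrite /p111 /p112 /p121 /p122 /p211 /p212 /p221 /p222.
rewrite !ident_v17 // /ident_img /= !inordK //=.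
by congr [:: _; _; _; _; _; _; _; _; _]; ring.
Qed.

Lemma ident_H_eqs_sub_XC2 : sub_ideal (map (@ident R) (H_eqs R)) C.
Proof.
rewrite ident_H_eqs; apply: sub_idealP.
by do 9 (apply/forall_cons; split; first by do ?apply: in_idealN; apply: in_ideal_nth).
Qed.

Lemma XC2_sub_ident_H_eqs : sub_ideal C (map (@ident R) (H_eqs R)).
Proof.
rewrite ident_H_eqs; apply: sub_idealP => _ /(nthP 0)[j lt_j <-].
case: j lt_j => [|[|[|[|[|[|[|[|[|//]]]]]]]]] _.
- exact: (in_ideal_nth (j := 0)).
- exact: (in_ideal_nth (j := 7)).
- by rewrite -[X in in_ideal _ X]opprK; apply/in_idealN/(in_ideal_nth (j := 3)).
- exact: (in_ideal_nth (j := 2)).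
- exact: (in_ideal_nth (j := 8)).
- by rewrite -[X in in_ideal _ X]opprK; apply/in_idealN/(in_ideal_nth (j := 5)).
- exact: (in_ideal_nth (j := 4)).
- exact: (in_ideal_nth (j := 6)).
- by rewrite -[X in in_ideal _ X]opprK; apply/in_idealN/(in_ideal_nth (j := 1)).
Qed.

End Identification.

Theorem proposition7p2 (R : comRingType) (f : {mpoly R[17]}) :
  in_ideal (H_eqs R ++ slice_eqs R) f <-> in_ideal (XC2_eqs R) (ident f).
Proof.
rewrite (in_ideal_preimage (psi := comp_mpoly (retract_tuple R)) (H_eqs R)
  (@ident_slice_eqs R) (@slice_congr_retract_ident R)).
by split; [apply: ident_H_eqs_sub_XC2 | apply: XC2_sub_ident_H_eqs].
Qed.
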